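(* Let $S$ be a finite set, $f:S\to\mathbb{R}$ a fitness function to be maximized, $S_{\mathrm{opt}}$ the set of maximizers of $f$ and $S_{\mathrm{non}}=S\setminus S_{\mathrm{opt}}$ (assumed nonempty). Let $s1,\dots,s\kappa$ be mutation operators on $S$ that are mutually complementary on $f$, i.e., writing $\rho_{\min}=\min\{\rho(\mathbf{T}_{s1}),\dots,\rho(\mathbf{T}_{s\kappa})\}$: for every $x\in S_{\mathrm{non}}$ and every $sl\in\{s1,\dots,s\kappa\}$ with $P_{sl}(x,x)\ge\rho_{\min}$, there exists $sk\neq sl$ with $P_{sk}(x,x)<\rho_{\min}$. Then there exists a strategy probability distribution $\mathbf{q}$ over $\{s1,\dots,s\kappa\}$ such that the homogeneous mixed strategy (1+1) EA with distribution $\mathbf{q}$ satisfies, for every $k=1,\dots,\kappa$, $R(\mathbf{T}_{\mathbf{q}})>R(\mathbf{T}_{sk})$ and $T(\mathbf{T}_{\mathbf{q}})<T(\mathbf{T}_{sk})$; i.e. its asymptotic convergence rate is larger and its asymptotic hitting time is shorter than those of any pure strategy EA using one of these mutation operators.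
   Context: A mutation operator $s$ on the finite set $S$ is a stochastic matrix $\mathbf{P}_{m,s}=[P_{m,s}(x,y)]_{x,y\in S}$ (probability that mutating $x$ yields $y$). Strict elitist selection between parent $x$ and offspring $y$ keeps $y$ if $f(y)>f(x)$ and keeps $x$ otherwise. The pure strategy (1+1) EA EA($s$) repeatedly mutates the current individual by $s$ and applies strict elitist selection; it is a homogeneous Markov chain on $S$ with transition probabilities $P_s(x,y)=P_{m,s}(x,y)$ if $f(y)>f(x)$, $P_s(x,y)=0$ if $y\neq x$ and $f(y)\le f(x)$, and $P_s(x,x)=1-\sum_{y:\,f(y)>f(x)}P_{m,s}(x,y)$. A (state-dependent) strategy probability distribution over operators $s1,\dots,s\kappa$ is a map $x\mapsto \mathbf{q}(x)=(q_{s1}(x),\dots,q_{s\kappa}(x))$ with $q_{sk}(x)\in[0,1]$ and $\sum_k q_{sk}(x)=1$. The homogeneous mixed strategy (1+1) EA with distribution $\mathbf{q}$ at each generation, with current individual $x$, chooses operator $sk$ with probability $q_{sk}(x)$, mutates $x$ by it, and applies strict elitist selection; its transition matrix is $P_{\mathbf{q}}(x,y)=\sum_{k}q_{sk}(x)P_{sk}(x,y)$. For such an EA with transition matrix $\mathbf{P}$, let $\mathbf{T}$ denote the submatrix $[P(x,y)]_{x,y\in S_{\mathrm{non}}}$ and $\rho(\mathbf{T})$ its spectral radius. The asymptotic convergence rate is $R(\mathbf{T})=-\ln\rho(\mathbf{T})$ (with $-\ln 0=+\infty$). The asymptotic hitting time is $T(\mathbf{T})=\rho((\mathbf{I}-\mathbf{T})^{-1})$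 if $\rho(\mathbf{T})<1$ and $T(\mathbf{T})=+\infty$ if $\rho(\mathbf{T})=1$. Subscripts $\mathbf{q}$ and $sk$ indicate the matrices of the mixed strategy EA and of the pure strategy EA($sk$), respectively. *)

From HB Require Import structures.
From mathcomp Require Import all_boot all_order all_algebra.
From mathcomp Require Import complex.
From mathcomp Require Import classical_sets reals constructive_ereal exp.
Set Implicit Arguments. Unset Strict Implicit. Unset Printing Implicit Defensive.
Import Order.TTheory GRing.Theory Num.Theory.
Local Open Scope ring_scope.

Section EA.
Variable R : realType.

Definition spectral_radius (n : nat) (A : 'M[R]_n) : R :=
  sup [set r : R | exists l : R[i],
        eigenvalue (map_mx (fun x : R => x%:C%C) A) l /\ r = ComplexField.Normc.normc l].

Variable S : finType.
Variable f : S -> R.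

Definition S_opt : {set S} := [set x | [forall y, f y <= f x]].
Definition S_non : {set S} := ~: S_opt.

(* a mutation operator: a stochastic matrix on S *)
Definition stochastic (Pm : S -> S -> R) :=
  (forall x y, 0 <= Pm x y) /\ (forall x, \sum_y Pm x y = 1).

(* transition probabilities of the pure strategy (1+1) EA with strict elitist selection *)
Definition ea_trans (Pm : S -> S -> R) (x y : S) : R :=
  if f x < f y then Pm x y
  else if y == x then 1 - \sum_(z | f x < f z) Pm x z else 0.

Definition strategy_dist (kappa : nat) (q : S -> 'I_kappa -> R) :=
  (forall x k, 0 <= q x k <= 1) /\ (forall x, \sum_k q x k = 1).

Definition mixed_trans (kappa : nat) (q : S -> 'I_kappa -> R)
  (P : 'I_kappa -> S -> S -> R) (x y : S) : R :=
  \sum_k q x k * P k x y.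

Definition Tsub (P : S -> S -> R) : 'M[R]_#|S_non| :=
  \matrix_(i, j) P (enum_val i) (enum_val j).

Definition conv_rate (n : nat) (T : 'M[R]_n) : \bar R :=
  if spectral_radius T == 0 then +oo%E else (- ln (spectral_radius T))%:E.

Definition hit_time (n : nat) (T : 'M[R]_n) : \bar R :=
  if spectral_radius T < 1 then (spectral_radius (invmx (1%:M - T)))%:E
  else +oo%E.

End EA.

From HB Require Import structures.
From mathcomp Require Import all_boot all_order all_algebra.
From mathcomp Require Import complex.
From mathcomp Require Import classical_sets reals constructive_ereal exp.
From mathcomp Require Import boolp lra.
Set Implicit Arguments. Unset Strict Implicit. Unset Printing Implicit Defensive.
Import Order.TTheory GRing.Theory Num.Theory.
Local Open Scope ring_scope.

(* Choose at every state x the operator minimising the self-loop probability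
   P_k(x,x); by complementarity this minimum is below rho_min on S_non.  The
   resulting chain is again an elitist EA, so its matrix T is triangular once
   the states are ordered by fitness: its spectrum consists of its diagonal
   entries, hence rho(T) < rho_min <= rho(T_k), and the eigenvalues of
   (I - T)^-1 are the numbers 1 / (1 - T(x,x)), which are then all smaller
   than 1 / (1 - d) for an eigenvalue d of T_k with rho(T) < d. *)

Section EigenvaluesOneSub.
Variables (F : fieldType) (n : nat) (B : 'M[F]_n).

Lemma unitmx_1_sub : ~~ eigenvalue B 1 -> (1%:M - B) \in unitmx.
Proof.
rewrite /eigenvalue /eigenspace negbK kermx_eq0 row_free_unit => unit_B1.
by rewrite -opprB -row_free_unit /row_free (eqmx_opp (B - 1%:M)) -/(row_free _)
           row_free_unit.
Qed.

Hypothesis unit_1_sub : (1%:M - B) \in unitmx.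

Lemma eigenvalue_invmx_1_sub mu : eigenvalue (invmx (1%:M - B)) mu ->
  exists2 l, eigenvalue B l & mu = (1 - l)^-1.
Proof.
move=> /eigenvalueP [v v_eig v_neq0].
have v_def : v = mu *: (v - v *m B).
  by rewrite -{1}(mulmx1 v) -(mulVmx unit_1_sub) mulmxA v_eig -scalemxAl
             mulmxBr mulmx1.
have mu_neq0 : mu != 0 by apply: contra v_neq0 => /eqP mu0; rewrite v_def mu0 scale0r.
exists (1 - mu^-1); last by rewrite opprB addrC subrK invrK.
apply/eigenvalueP; exists v => //.
rewrite scalerBl scale1r; apply/eqP; rewrite eq_sym subr_eq addrC -subr_eq.
by rewrite [X in _ == _ *: X]v_def scalerA mulVf // scale1r.
Qed.

Lemma eigenvalue_1_sub_invmx l : eigenvalue B l ->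
  eigenvalue (invmx (1%:M - B)) (1 - l)^-1.
Proof.
move=> /eigenvalueP [v v_eig v_neq0].
have v_1_sub : v *m (1%:M - B) = (1 - l) *: v.
  by rewrite mulmxBr mulmx1 v_eig scalerBl scale1r.
have v_def : v = (1 - l) *: (v *m invmx (1%:M - B)).
  by rewrite scalemxAl -v_1_sub -mulmxA mulmxV // mulmx1.
have l_neq1 : 1 - l != 0 by apply: contra v_neq0 => /eqP l1; rewrite v_def l1 scale0r.
apply/eigenvalueP; exists v => //.
by rewrite {2}v_def scalerA mulVf // scale1r.
Qed.

End EigenvaluesOneSub.

(* [A i j != 0] only for [g i < g j] off the diagonal: after sorting the
   indices by [g], [A] is upper triangular. *)
Definition support_increasing (F : fieldType) (d : Order.disp_t) (T : orderType d)
  n (g : 'I_n -> T) (A : 'M[F]_n) :=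
  forall i j, i != j -> A i j != 0 -> (g i < g j)%O.

Lemma eigenvalue_support_increasing (F : fieldType) (d : Order.disp_t)
    (T : orderType d) n (g : 'I_n -> T) (A : 'M[F]_n) :
  support_increasing g A -> forall l, eigenvalue A l -> exists i, l = A i i.
Proof.
move=> incr l /eigenvalueP [v v_eig v_neq0].
have [i0 vi0] : exists i, v 0 i != 0.
  case: (pickP (fun i => v 0 i != 0)) => [i vi|v0]; first by exists i.
  by case/eqP: v_neq0; apply/rowP => i; rewrite mxE; apply/eqP/negbFE/v0.
(* at a support index of [v] minimising [g], the eigen-equation reads v_j A_jj = l v_j *)
case: (@arg_minP _ _ _ i0 (fun j => v 0 j != 0) g vi0) => j vj j_min.
exists j; have := congr1 (fun M : 'rV__ => M 0 j) v_eig.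
rewrite !mxE (bigD1 j) //= big1 ?addr0 => [|k kj].
  by move=> e; apply: (mulIf vj); rewrite -e mulrC.
have [->|vk] := eqVneq (v 0 k) 0; first by rewrite mul0r.
suff -> : A k j = 0 by rewrite mulr0.
by apply/eqP; apply: contraT => Akj; have := incr k j kj Akj; rewrite ltNge j_min.
Qed.

Section SpectralRadius.
Variable R : realType.
Local Notation toC := (fun x : R => x%:C%C).

Definition real_spectrum_in n (M : 'M[R]_n) (c : 'I_n -> R) :=
  forall l, eigenvalue (map_mx toC M) l -> exists i, l = (c i)%:C%C.

Lemma normc_real (x : R) : ComplexField.Normc.normc (x%:C)%C = `|x|.
Proof. by rewrite /= expr0n /= addr0 sqrtr_sqr. Qed.

Variables (n : nat) (M : 'M[R]_n) (c : 'I_n -> R).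
Hypothesis spectrum_in_c : real_spectrum_in M c.

Local Open Scope classical_set_scope.
(* [sup] of an empty set is [0], which is the spectral radius when [n = 0]. *)
Let moduli := [set r : R | exists l : R[i],
  eigenvalue (map_mx toC M) l /\ r = ComplexField.Normc.normc l].

Let moduli_ubound : has_ubound moduli.
Proof.
exists (\sum_i `|c i|) => r [l [l_eig ->]]; have [i ->] := spectrum_in_c l_eig.
by rewrite normc_real (bigD1 i) //= lerDl sumr_ge0.
Qed.
Local Close Scope classical_set_scope.

Lemma normc_le_spectral_radius l : eigenvalue (map_mx toC M) l ->
  ComplexField.Normc.normc l <= spectral_radius M.
Proof. by move=> l_eig; apply: (ub_le_sup moduli_ubound); exists l. Qed.

Lemma spectral_radius_le b : 0 <= b -> (forall i, `|c i| <= b) ->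
  spectral_radius M <= b.
Proof.
move=> b_ge0 c_le; rewrite /spectral_radius -/moduli.
have [ne|no_moduli] := pselect (moduli !=set0)%classic; last first.
  by rewrite sup_out // => -[/no_moduli].
by apply: (ge_sup ne) => r [l [l_eig ->]]; have [i ->] := spectrum_in_c l_eig;
   rewrite normc_real.
Qed.

Lemma spectral_radius_ge0 : 0 <= spectral_radius M.
Proof.
rewrite /spectral_radius -/moduli.
have [[r moduli_r]|no_moduli] := pselect (moduli !=set0)%classic; last first.
  by rewrite sup_out // => -[/no_moduli].
apply: le_trans (ub_le_sup moduli_ubound moduli_r).
by case: moduli_r => l [l_eig ->]; have [i ->] := spectrum_in_c l_eig;
   rewrite normc_real.
Qed.

Lemma spectral_radius_gt b : 0 <= b -> b < spectral_radius M ->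
  exists2 i, eigenvalue (map_mx toC M) (c i)%:C%C & b < `|c i|.
Proof.
move=> b_ge0; rewrite /spectral_radius -/moduli.
have [ne|no_moduli] := pselect (moduli !=set0)%classic; last first.
  by rewrite sup_out ?ltNge ?b_ge0 // => -[/no_moduli].
move=> /(sup_gt ne) [r [l [l_eig ->]] b_lt]; have [i li] := spectrum_in_c l_eig.
by subst l; exists i; rewrite // -normc_real.
Qed.

End SpectralRadius.

Lemma support_increasing_real_spectrum (R : realType) (d : Order.disp_t)
    (U : orderType d) n (g : 'I_n -> U) (T : 'M[R]_n) :
  support_increasing g T -> real_spectrum_in T (fun i => T i i).
Proof.
move=> incr l /(@eigenvalue_support_increasing _ _ _ _ g) [i j ij|i ->].
  by rewrite mxE fmorph_eq0; apply: incr.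
by exists i; rewrite mxE.
Qed.

Section DiagonalSpectrum.
Variables (R : realType) (n : nat) (T : 'M[R]_n).
Local Notation toC := (fun x : R => x%:C%C).
Hypothesis spectrum_diag : real_spectrum_in T (fun i => T i i).
Hypothesis diag_01 : forall i, 0 <= T i i <= 1.

Lemma spectral_radius_diag_le b : 0 <= b -> (forall i, T i i <= b) ->
  spectral_radius T <= b.
Proof.
move=> b_ge0 diag_le; apply: spectral_radius_le spectrum_diag _ b_ge0 _ => i.
by have /andP[Tii_ge0 _] := diag_01 i; rewrite ger0_norm.
Qed.

Lemma unitmx_1_sub_diag : spectral_radius T < 1 -> (1%:M - T) \in unitmx.
Proof.
move=> rho_lt1; rewrite -(map_unitmx (real_complex R)) map_mxB map_mx1.
apply/unitmx_1_sub/negP => /(normc_le_spectral_radius spectrum_diag).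
by rewrite ComplexField.Normc.normc1 => /(le_lt_trans)/(_ rho_lt1); rewrite ltxx.
Qed.

Lemma map_invmx_1_sub :
  map_mx toC (invmx (1%:M - T)) = invmx (1%:M - map_mx toC T).
Proof. by rewrite map_invmx map_mxB map_mx1. Qed.

Lemma inv_1_sub_real (d : R) : ((1 - d%:C)^-1 = ((1 - d)^-1)%:C)%C.
Proof. by rewrite fmorphV rmorphB rmorph1. Qed.

Lemma unitmx_map_1_sub : (1%:M - T) \in unitmx -> (1%:M - map_mx toC T) \in unitmx.
Proof. by rewrite -(map_unitmx (real_complex R)) map_mxB map_mx1. Qed.

Lemma spectrum_invmx_1_sub : (1%:M - T) \in unitmx ->
  real_spectrum_in (invmx (1%:M - T)) (fun i => (1 - T i i)^-1).
Proof.
move=> /unitmx_map_1_sub unitC mu.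
rewrite map_invmx_1_sub => /(eigenvalue_invmx_1_sub unitC).
by case=> l /spectrum_diag [i ->] ->; exists i; rewrite inv_1_sub_real.
Qed.

Lemma eigenvalue_invmx_1_sub_real d : (1%:M - T) \in unitmx ->
  eigenvalue (map_mx toC T) d%:C%C ->
  eigenvalue (map_mx toC (invmx (1%:M - T))) ((1 - d)^-1)%:C%C.
Proof.
move=> /unitmx_map_1_sub unitC.
by rewrite map_invmx_1_sub -inv_1_sub_real; apply: eigenvalue_1_sub_invmx.
Qed.

Lemma spectral_radius_invmx_le b : 0 <= b -> b < 1 -> (forall i, T i i <= b) ->
  spectral_radius (invmx (1%:M - T)) <= (1 - b)^-1.
Proof.
move=> b_ge0 b_lt1 diag_le.
have rho_lt1 := le_lt_trans (spectral_radius_diag_le b_ge0 diag_le) b_lt1.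
have b1_gt0 : 0 < 1 - b by rewrite subr_gt0.
apply: spectral_radius_le (spectrum_invmx_1_sub (unitmx_1_sub_diag rho_lt1)) _ _ _.
  by rewrite invr_ge0 ltW.
move=> i; have /andP[Tii_ge0 _] := diag_01 i.
have Tii1_gt0 : 0 < 1 - T i i by rewrite subr_gt0 (le_lt_trans (diag_le i)).
rewrite ger0_norm; last by rewrite invr_ge0 ltW.
by rewrite lef_pV2 ?posrE // lerD2l lerN2.
Qed.

Lemma spectral_radius_invmx_gt b : 0 <= b -> b < spectral_radius T ->
  spectral_radius T < 1 -> (1 - b)^-1 < spectral_radius (invmx (1%:M - T)).
Proof.
move=> b_ge0 b_lt rho_lt1; have U := unitmx_1_sub_diag rho_lt1.
have [i Tii_eig b_lt_Tii] := spectral_radius_gt spectrum_diag b_ge0 b_lt.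
have /andP[Tii_ge0 _] := diag_01 i; rewrite (ger0_norm Tii_ge0) in b_lt_Tii.
have Tii_lt1 : T i i < 1.
  apply: le_lt_trans rho_lt1.
  by have := normc_le_spectral_radius spectrum_diag Tii_eig; rewrite normc_real (ger0_norm Tii_ge0).
have Tii1_gt0 : 0 < 1 - T i i by rewrite subr_gt0.
have b1_gt0 : 0 < 1 - b by rewrite subr_gt0 (lt_trans b_lt_Tii).
apply: (@lt_le_trans _ _ ((1 - T i i)^-1)).
  by rewrite ltf_pV2 ?posrE // ltrD2l ltrN2.
have inv_ge0 : 0 <= (1 - T i i)^-1 by rewrite invr_ge0 ltW.
have := normc_le_spectral_radius (spectrum_invmx_1_sub U)
          (eigenvalue_invmx_1_sub_real U Tii_eig).
by rewrite normc_real (ger0_norm inv_ge0).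
Qed.

End DiagonalSpectrum.

Lemma conv_rate_lt (R : realType) n m (A : 'M[R]_n) (B : 'M[R]_m) :
  0 <= spectral_radius B -> spectral_radius B < spectral_radius A ->
  (conv_rate A < conv_rate B)%E.
Proof.
move=> rhoB_ge0 rhoB_lt; have rhoA_gt0 := le_lt_trans rhoB_ge0 rhoB_lt.
rewrite /conv_rate (negbTE (lt0r_neq0 rhoA_gt0)).
case: eqP => [_|/eqP rhoB_neq0]; first exact: ltry.
have rhoB_gt0 : 0 < spectral_radius B by rewrite lt0r rhoB_neq0.
by rewrite lte_fin ltrN2 ltr_ln ?posrE.
Qed.

Section DiagonalSpectrumComparison.
Variables (R : realType) (n m : nat) (T : 'M[R]_n) (T' : 'M[R]_m).
Hypotheses (specT : real_spectrum_in T (fun i => T i i))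
           (diagT : forall i, 0 <= T i i <= 1)
           (specT' : real_spectrum_in T' (fun i => T' i i))
           (diagT' : forall i, 0 <= T' i i <= 1).

Lemma hit_time_diag_lt b : 0 <= b -> (forall i, T i i <= b) ->
  b < spectral_radius T' -> (hit_time T < hit_time T')%E.
Proof.
move=> b_ge0 diag_le b_lt'.
have b_lt1 : b < 1.
  apply: lt_le_trans b_lt' _; apply: (spectral_radius_diag_le specT' diagT' ler01).
  by move=> i; case/andP: (diagT' i).
rewrite /hit_time (le_lt_trans (spectral_radius_diag_le specT diagT b_ge0 diag_le) b_lt1).
have [rho'_lt1|] := ltP (spectral_radius T') 1; last by rewrite ltry.
rewrite lte_fin; apply: le_lt_trans (spectral_radius_invmx_le specT diagT b_ge0 b_lt1 diag_le) _.
exact (spectral_radius_invmx_gt specT' diagT' b_ge0 b_lt' rho'_lt1).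
Qed.

Lemma spectral_radius_diag_lt_rates r :
  0 < r -> (forall i, T i i < r) -> r <= spectral_radius T' ->
  (conv_rate T' < conv_rate T)%E /\ (hit_time T < hit_time T')%E.
Proof.
move=> r_gt0 diag_lt r_le.
pose b := \big[Num.max/0]_i T i i.
have b_ge0 : 0 <= b := bigmax_ge_id _ _ _ _.
have diag_le i : T i i <= b := le_bigmax 0 (fun i => T i i) i.
have b_lt' : b < spectral_radius T'.
  by apply: lt_le_trans r_le; apply: bigmax_lt.
split; last exact: hit_time_diag_lt b_ge0 diag_le b_lt'.
apply: conv_rate_lt (spectral_radius_ge0 specT) _.
exact: le_lt_trans (spectral_radius_diag_le specT diagT b_ge0 diag_le) b_lt'.
Qed.

End DiagonalSpectrumComparison.

Section ElitistEA.
Variables (R : realType) (S : finType) (f : S -> R).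

Lemma ea_trans_diag_01 (Pm : S -> S -> R) :
  stochastic Pm -> forall x, 0 <= ea_trans f Pm x x <= 1.
Proof.
move=> [Pm_ge0 Pm_sum1] x; rewrite /ea_trans ltxx eqxx.
have := Pm_sum1 x; rewrite (bigID (fun z => f x < f z)) /= => sum1.
have up_ge0 : 0 <= \sum_(z | f x < f z) Pm x z by apply: sumr_ge0.
have rest_ge0 : 0 <= \sum_(z | ~~ (f x < f z)) Pm x z by apply: sumr_ge0.
apply/andP; split; lra.
Qed.

Lemma support_increasing_Tsub_ea (Pm : S -> S -> R) :
  support_increasing (fun i => f (enum_val i)) (Tsub f (ea_trans f Pm)).
Proof.
move=> i j ij; rewrite mxE /ea_trans; case: ifP => // _.
by rewrite (inj_eq enum_val_inj) (negbTE (_ : j != i)) ?eqxx // eq_sym.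
Qed.

Lemma ea_rates_lt (Pm Pm' : S -> S -> R) r :
  stochastic Pm -> stochastic Pm' -> 0 < r ->
  (forall x, x \in S_non f -> ea_trans f Pm x x < r) ->
  r <= spectral_radius (Tsub f (ea_trans f Pm')) ->
  (conv_rate (Tsub f (ea_trans f Pm')) < conv_rate (Tsub f (ea_trans f Pm)))%E /\
  (hit_time (Tsub f (ea_trans f Pm)) < hit_time (Tsub f (ea_trans f Pm')))%E.
Proof.
move=> stoch stoch' r_gt0 diag_lt r_le.
have diag_01 P : stochastic P -> forall i, 0 <= Tsub f (ea_trans f P) i i <= 1.
  by move=> stochP i; rewrite mxE; apply: ea_trans_diag_01.
have spectrum P := support_increasing_real_spectrum (support_increasing_Tsub_ea (Pm := P)).
apply: (spectral_radius_diag_lt_rates (spectrum _) (diag_01 _ stoch)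
          (spectrum _) (diag_01 _ stoch') r_gt0 _ r_le).
by move=> i; rewrite mxE; apply/diag_lt/enum_valP.
Qed.

Definition dirac_strategy kappa (s : S -> 'I_kappa) : S -> 'I_kappa -> R :=
  fun x k => (k == s x)%:R.

Lemma strategy_dist_dirac kappa (s : S -> 'I_kappa) : strategy_dist (dirac_strategy s).
Proof.
split=> x; first by move=> k; rewrite /dirac_strategy; case: (k == s x); rewrite ?lexx ?ler01.
by rewrite (bigD1 (s x)) //= /dirac_strategy eqxx big1 ?addr0 // => k /negbTE ->.
Qed.

Lemma mixed_trans_dirac kappa (s : S -> 'I_kappa) (P : 'I_kappa -> S -> S -> R) :
  mixed_trans (dirac_strategy s) P = fun x => P (s x) x.
Proof.
apply/funext => x; apply/funext => y; rewrite /mixed_trans (bigD1 (s x)) //=.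
by rewrite /dirac_strategy eqxx mul1r big1 ?addr0 // => k /negbTE ->; rewrite mul0r.
Qed.

Lemma stochastic_select kappa (Pm : 'I_kappa -> S -> S -> R) (s : S -> 'I_kappa) :
  (forall k, stochastic (Pm k)) -> stochastic (fun x => Pm (s x) x).
Proof. by move=> stoch; split=> x; [move=> y|]; case: (stoch (s x)). Qed.

End ElitistEA.

Arguments dirac_strategy {R S kappa} s x k.

Theorem theorem4 (R : realType) (S : finType) (f : S -> R) (kappa : nat)
  (Pm : 'I_kappa.+1 -> S -> S -> R) :
  S_non f != finset.set0 ->
  (forall k, stochastic (Pm k)) ->
  (let rho_min := \big[Num.min/spectral_radius (Tsub f (ea_trans f (Pm ord0)))]_k
                    spectral_radius (Tsub f (ea_trans f (Pm k))) in
   forall x, x \in S_non f -> forall l,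
     rho_min <= ea_trans f (Pm l) x x ->
     exists2 k, k != l & ea_trans f (Pm k) x x < rho_min) ->
  exists q : S -> 'I_kappa.+1 -> R,
    strategy_dist q /\
    forall k,
      (conv_rate (Tsub f (ea_trans f (Pm k))) <
         conv_rate (Tsub f (mixed_trans q (fun k => ea_trans f (Pm k)))))%E /\
      (hit_time (Tsub f (mixed_trans q (fun k => ea_trans f (Pm k)))) <
         hit_time (Tsub f (ea_trans f (Pm k))))%E.
Proof.
move=> S_non_neq0 stoch complementary; rewrite /= in complementary.
set rho_min := \big[Num.min/_]_k _ in complementary.
pose best x := [arg min_(k < ord0) ea_trans f (Pm k) x x]%O.
have best_le x k : ea_trans f (Pm (best x)) x x <= ea_trans f (Pm k) x x.
  by rewrite /best; case: arg_minP => // j _; apply.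
have best_lt x : x \in S_non f -> ea_trans f (Pm (best x)) x x < rho_min.
  move=> x_non; rewrite ltNge; apply/negP => /[dup] rho_le.
  move/(complementary x x_non) => [k _ Pk_lt].
  by have := lt_le_trans (lt_le_trans Pk_lt rho_le) (best_le x k); rewrite ltxx.
have [x0 x0_non] := set0Pn _ S_non_neq0.
have rho_min_gt0 : 0 < rho_min.
  apply: le_lt_trans (best_lt x0 x0_non).
  by case/andP: (ea_trans_diag_01 f (stoch (best x0)) x0).
exists (dirac_strategy best); split; first exact: strategy_dist_dirac.
move=> k; rewrite mixed_trans_dirac.
apply: (ea_rates_lt (stochastic_select best stoch) (stoch k) rho_min_gt0 best_lt).
exact: bigmin_le.
Qed.
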